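(* Let $R$ be a commutative ring with unit, let $G=(V,E)$ be a finite transitive digraph, and let $f:V\to[0,+\infty)$ be any discrete Morse function on $G$. Take as basis $B_n(G)$ of $\Omega_n(G)$ the set of allowed elementary $n$-paths of $G$, and let $\mathcal M=\mathcal M(G,f)$. Then the chain complex $(\Omega_*(G),\partial_* )$ decomposes as a direct sum of chain complexes $$\Omega_*(G)\cong C^{\mathcal M}_*(B_*(G))\ \oplus\ \bigoplus_{(a,b)\in\mathcal M}\mathrm{Atom}(\dim b),$$ and for each $n\ge 0$, $$H_n(\{\Omega_*(G),\partial_*\};R)\cong H_n(\{C^{\mathcal M}_*(B_*(G)),\partial^{\mathcal M}_*\};R).$$
   Context: A digraph $G=(V,E)$ consists of a set $V$ of vertices and a set $E\subseteq (V\times V)\setminus\{(v,v):v\in V\}$ of directed edges; $(u,v)\in E$ is written $u\to v$. $G$ is transitive if whenever $u\to v$ and $v\to w$ are edges, $u\to w$ is an edge. An allowed elementary $n$-path ($n\ge0$) is a sequence $v_0v_1\cdots v_n$ of vertices with $v_{i-1}\to v_i\in E$ for $1\le i\le n$ (vertices may repeat non-consecutively). For allowed elementary paths write $\gamma'<\gamma$ (or $\gamma>\gamma'$) if $\gamma'$ is obtained from $\gamma$ by deleting some of its entries. For $n\ge0$, $\Lambda_n(V)$ is the free $R$-module on sequences $v_0\cdots v_n$ of vertices with $v_{i-1}\ne v_i$ for all $i$, and $\partial_n=\sum_{i=0}^n(-1)^id_i$, where $d_i$ deletes the entry $v_i$ and a resulting sequence with two equal consecutive entries is taken to be $0$. $P_n(G)\subseteq\Lambda_n(V)$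 is the submodule spanned by allowed elementary $n$-paths and $\Omega_n(G)=\{x\in P_n(G):\partial_nx\in P_{n-1}(G)\}$; $(\Omega_*(G),\partial_* )$ is a chain complex whose homology is the path homology of $G$. (For transitive $G$, $\Omega_n(G)=P_n(G)$.) A map $f:V\to[0,+\infty)$ is a discrete Morse function on $G$ if for every allowed elementary path $v_0\cdots v_n$: (i) there is at most one index $0\le i\le n$ with $f(v_i)=0$ such that $v_0\cdots v_{i-1}v_{i+1}\cdots v_n$ is an allowed elementary $(n-1)$-path; (ii) there is at most one vertex $u$ with $f(u)=0$ such that for some $-1\le j\le n$ the sequence $v_0\cdots v_juv_{j+1}\cdots v_n$ (meaning $uv_0\cdots v_n$ if $j=-1$ and $v_0\cdots v_nu$ if $j=n$) is an allowed elementary $(n+1)$-path. For an allowed elementary path set $f(v_0\cdots v_n)=\sum_i f(v_i)$. $\mathcal M(G,f)$ is the set of all pairs $(\alpha,\beta)$ where $\alpha$ is an allowed elementary $n$-path and $\beta$ an allowed elementary $(n+1)$-path for some $n\ge0$, $\alpha<\beta$ and $f(\alpha)=f(\beta)$. Morse complex: for $b\in B_n(G)$, $a\in B_{n-1}(G)$ let $\langle\partial b,a\rangle$ be the coefficient of $a$ in $\partial_n b$; write $b\succ a$ if $\langle\partial b,a\rangle\neq0$. Let $\mathcal C(B_n(G))$ be the set of elements of $B_n(G)$ lying in no pair of $\mathcal M$. An alternating path $p$ from $b\in B_n(G)$ to $a\in B_{n-1}(G)$ is a sequence $b\succ a_1,\ (a_1,b_1)\in\mathcal M,\ b_1\succ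 a_2,\ (a_2,b_2)\in\mathcal M,\dots,(a_k,b_k)\in\mathcal M,\ b_k\succ a$ ($k\ge0$); put $p^\bullet=b$, $p_\bullet=a$ and $m(p)=(-1)^k\frac{\langle\partial b,a_1\rangle\langle\partial b_1,a_2\rangle\cdots\langle\partial b_k,a\rangle}{\langle\partial b_1,a_1\rangle\cdots\langle\partial b_k,a_k\rangle}$ (the denominators are inverted in $R$). The Morse complex $C^{\mathcal M}_n(B_*(G))$ is the free $R$-module on $\mathcal C(B_n(G))$ with $\partial^{\mathcal M}_n(b)=\sum_p m(p)\,p_\bullet$, summed over alternating paths $p$ with $p^\bullet=b$ and $p_\bullet\in\mathcal C(B_{n-1}(G))$. $\mathrm{Atom}(d)$ denotes the chain complex with $R$ in degrees $d$ and $d-1$, zero elsewhere, and identity differential. *)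

From HB Require Import structures.
From mathcomp Require Import all_boot all_order all_algebra.
From mathcomp Require Import Rstruct.
Set Implicit Arguments.
Unset Strict Implicit.
Unset Printing Implicit Defensive.
Import Order.TTheory GRing.Theory Num.Theory.
Local Open Scope ring_scope.

Notation Real := Rdefinitions.R.

Section PathHomology.
Variables (V : finType) (E : rel V).

Definition allowed (s : seq V) : bool :=
  if s is x :: s' then path E x s' else false.

Definition delete (i : nat) (s : seq V) : seq V := take i s ++ drop i.+1 s.
Definition insert (k : nat) (u : V) (s : seq V) : seq V := take k s ++ u :: drop k s.

Definition APath (n : nat) := {t : n.+1.-tuple V | allowed t}.
Definition ps n (a : APath n) : seq V := val (val a).

(** <d b, a> : coefficient of a in the boundary of b, for b an (m+1)-path
    and a an m-path: sum of (-1)^i over the i with d_i b = a (a deletion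
    producing two equal consecutive entries gives 0 and never equals an
    allowed path since E is irreflexive). *)
Definition coef (R : ringType) m (b : APath m.+1) (a : APath m) : R :=
  \sum_(i < m.+2 | delete i (ps b) == ps a) (-1) ^+ i.

(** Omega_n(G) = P_n(G) (G transitive): free module on B_n(G) *)
Definition Om (R : ringType) (n : nat) := {ffun APath n -> R^o}.

Definition dOm_succ (R : ringType) m (x : Om R m.+1) : Om R m :=
  [ffun a => \sum_(b : APath m.+1) x b * coef R b a].

Definition dOm (R : ringType) (n : nat) : Om R n -> Om R n.-1 :=
  match n return Om R n -> Om R n.-1 with
  | 0 => fun _ => 0
  | m.+1 => @dOm_succ R m
  end.

Definition MorseFn (f : V -> Real) : Prop :=
  (forall n (t : n.+1.-tuple V), allowed t ->
     forall i j : 'I_n.+1,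
       f (tnth t i) = 0 -> allowed (delete i t) ->
       f (tnth t j) = 0 -> allowed (delete j t) -> i = j) /\
  (forall n (t : n.+1.-tuple V), allowed t ->
     forall u u' : V,
       f u = 0 -> (exists k, (k <= n.+1)%N /\ allowed (insert k u t)) ->
       f u' = 0 -> (exists k, (k <= n.+1)%N /\ allowed (insert k u' t)) ->
       u = u').

Variable f : V -> Real.

Definition fval (s : seq V) : Real := \sum_(v <- s) f v.

Definition Mb m (a : APath m) (b : APath m.+1) : bool :=
  subseq (ps a) (ps b) && (fval (ps a) == fval (ps b)).

Definition matched_down n : APath n -> bool :=
  match n return APath n -> bool with
  | 0 => fun _ => false
  | m.+1 => fun b => [exists a : APath m, Mb a b]
  end.
Definition critb n (b : APath n) : bool :=
  ~~ matched_down b && ~~ [exists c : APath n.+1, Mb b c].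
Definition Crit n := {b : APath n | critb b}.

Section MorseDiff.
Variables (R : comUnitRingType) (m : nat).

(** alternating paths from b (degree m+1) to a (degree m), encoded by the
    list of matched pairs (a_1,b_1),...,(a_k,b_k).  [alt_ok b pa t] checks
    b > a_1, (a_1,b_1) in M, b_1 > a_2 with a_2 <> a_1, ..., b_k > a
    (with a <> a_k); pa is the previous a_i. *)
Fixpoint alt_ok (a : APath m) (b : APath m.+1) (pa : option (APath m))
    (t : seq (APath m * APath m.+1)) : bool :=
  match t with
  | [::] => (coef R b a != 0) && (Some a != pa)
  | (ai, bi) :: t' =>
      [&& coef R b ai != 0, Some ai != pa, Mb ai bi & alt_ok a bi (Some ai) t']
  end.

Fixpoint alt_weight (a : APath m) (b : APath m.+1)
    (t : seq (APath m * APath m.+1)) : R :=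
  match t with
  | [::] => coef R b a
  | (ai, bi) :: t' =>
      - (coef R b ai * (coef R bi ai)^-1) * alt_weight a bi t'
  end.

(** Paths are taken
    with pairwise distinct b_i (every alternating path is of this form when
    M is acyclic, which makes the sum finite); their length is then at most
    #|B_{m+1}|. *)
Definition morse_coef (b : APath m.+1) (a : APath m) : R :=
  \sum_(k < #|{: APath m.+1}|.+1)
    \sum_(t : k.-tuple (APath m * APath m.+1)
          | uniq (map snd t) && alt_ok a b None t)
      alt_weight a b t.

Definition CM_succ_d (x : {ffun Crit m.+1 -> R}) : {ffun Crit m -> R} :=
  [ffun a => \sum_(b : Crit m.+1) x b * morse_coef (val b) (val a)].
End MorseDiff.

Definition CM (R : comUnitRingType) (n : nat) := {ffun Crit n -> R^o}.
Definition dCM (R : comUnitRingType) (n : nat) : CM R n -> CM R n.-1 :=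
  match n return CM R n -> CM R n.-1 with
  | 0 => fun _ => 0
  | m.+1 => @CM_succ_d R m
  end.

(** bigoplus_{(a,b) in M} Atom(dim b): each pair p = (a,b) with dim b = d
    contributes a generator "top p" in degree d and "bot p" in degree d-1,
    with differential top p |-> bot p. *)
Definition MPair m := {p : APath m * APath m.+1 | Mb p.1 p.2}.
Definition topT (n : nat) : finType :=
  match n with 0 => void | m.+1 => MPair m end.
Definition At (R : ringType) (n : nat) := {ffun (topT n + MPair n)%type -> R^o}.
Definition dAt_succ (R : ringType) m (x : At R m.+1) : At R m :=
  [ffun j => match j with inl _ => 0 | inr p => x (inl p) end].
Definition dAt (R : ringType) (n : nat) : At R n -> At R n.-1 :=
  match n return At R n -> At R n.-1 with
  | 0 => fun _ => 0
  | m.+1 => @dAt_succ R m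
  end.

Definition SumCx (R : comUnitRingType) (n : nat) := (CM R n * At R n)%type.
Definition dSum (R : comUnitRingType) (n : nat) (x : SumCx R n) : SumCx R n.-1 :=
  (dCM x.1, dAt x.2).

End PathHomology.

Section Complexes.
Variable R : ringType.

Definition complex_iso (C D : nat -> lmodType R)
    (dC : forall n, C n -> C n.-1) (dD : forall n, D n -> D n.-1) : Prop :=
  exists phi : forall n, C n -> D n,
    (forall n a x y, phi n (a *: x + y) = a *: phi n x + phi n y) /\
    (forall n, bijective (phi n)) /\
    (forall n x, phi n.-1 (dC n x) = dD n (phi n x)).

Definition cycle_ (C : nat -> lmodType R) (d : forall n, C n -> C n.-1) n
  (x : C n) : Prop := d n x = 0.
Definition bdry (C : nat -> lmodType R) (d : forall n, C n -> C n.-1) n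
  (x : C n) : Prop := exists y : C n.+1, d n.+1 y = x.

(** An R-linear bijection
    theta : Z_n(C)/B_n(C) -> Z_n(D)/B_n(D) is described by a representative
    lift F (theta [x] = [F x]): F maps cycles to cycles, is additive and
    R-homogeneous modulo boundaries (so theta is well defined and linear),
    F x is a boundary iff x is (theta injective), and every class of D is
    hit (theta surjective).  By choice every isomorphism has such a lift. *)
Definition homology_iso (C D : nat -> lmodType R)
    (dC : forall n, C n -> C n.-1) (dD : forall n, D n -> D n.-1) (n : nat) : Prop :=
  exists F : C n -> D n,
    (forall x, cycle_ dC x -> cycle_ dD (F x)) /\
    (forall x y, cycle_ dC x -> cycle_ dC y -> bdry dD (F (x + y) - (F x + F y))) /\
    (forall a x, cycle_ dC x -> bdry dD (F (a *: x) - a *: F x)) /\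
    (forall x, cycle_ dC x -> (bdry dC x <-> bdry dD (F x))) /\
    (forall y, cycle_ dD y -> exists2 x, cycle_ dC x & bdry dD (y - F x)).
End Complexes.

Definition OmC (V : finType) (E : rel V) (R : ringType) : nat -> lmodType R :=
  fun n => {ffun APath E n -> R^o}.
Definition CMC (V : finType) (E : rel V) (f : V -> Real) (R : comUnitRingType)
  : nat -> lmodType R := fun n => {ffun Crit E f n -> R^o}.
Definition SumC (V : finType) (E : rel V) (f : V -> Real) (R : comUnitRingType)
  : nat -> lmodType R := fun n =>
    ({ffun Crit E f n -> R^o} * {ffun (topT E f n + MPair E f n)%type -> R^o})%type.

(* Transitivity makes every face of an allowed path allowed, so condition (i)
   says that an allowed path has at most one vertex where f vanishes, and a
   matched pair (a, b) is b with that vertex deleted.  Hence M is a matching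
   without chains a < b < c, the incidence <d b, a> of a matched pair is a
   sign, and <d b', a> = 0 for distinct matched pairs (a, b), (a', b'); in
   particular alternating paths have length at most one.  In each degree the
   chains
     c - sum_((a', b') in M) <d c, a'> / <d b', a'> b'    (c critical),
     b  and  d b                                          ((a, b) in M)
   form a basis of Omega_n.  The boundary of the first family is given by the
   Morse coefficients and d sends b to d b, so this basis splits Omega_* into
   the Morse complex and one atom per matched pair; atoms are exact, hence the
   homology is that of the Morse complex. *)

From HB Require Import structures.
From mathcomp Require Import all_boot all_order all_algebra.
From mathcomp Require Import Rstruct zify.
Import Order.TTheory GRing.Theory Num.Theory.
Local Open Scope ring_scope.
Set Implicit Arguments.
Unset Strict Implicit.
Unset Printing Implicit Defensive.

Lemma sum_kronecker (R : pzSemiRingType) (I : finType) (j : I) (F : I -> R) :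
  \sum_i (i == j)%:R * F i = F j.
Proof.
by rewrite (bigD1 j) //= eqxx mul1r big1 ?addr0 // => i /negbTE ->; rewrite mul0r.
Qed.

Lemma sum_tuple0 (M : nmodType) (T : finType) (F : 0.-tuple T -> M) :
  \sum_t F t = F [tuple].
Proof. by rewrite (big_pred1 [tuple]) // => t; apply/esym/eqP/tuple0. Qed.

Lemma sum_tuple1 (M : nmodType) (T : finType) (F : 1.-tuple T -> M) :
  \sum_t F t = \sum_(x : T) F [tuple x].
Proof.
rewrite (reindex (fun x : T => [tuple x])) //.
exists (@thead 0 T) => [x _|t _]; first by rewrite theadE.
by case: t => -[|x [|]] //= size_t; apply: val_inj.
Qed.

Lemma sum_sig (M : nmodType) (T : finType) (P : pred T) (F : T -> M) :
  \sum_(x | P x) F x = \sum_(p : {x | P x}) F (val p).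
Proof.
rewrite (reindex_omap (val : {x | P x} -> T) insub) => [|x Px]; last by rewrite insubT.
by apply: eq_bigl => p; rewrite valK eqxx (valP p).
Qed.

Lemma sum_sumType (M : nmodType) (I1 I2 : finType) (F : I1 + I2 -> M) :
  \sum_j F j = \sum_i F (inl i) + \sum_i F (inr i).
Proof. exact: big_sumType. Qed.

Lemma ffunD (M : nmodType) (I : finType) (x y : {ffun I -> M}) i :
  (x + y) i = x i + y i.
Proof. by rewrite !ffunE. Qed.

Lemma ffunB (M : zmodType) (I : finType) (x y : {ffun I -> M}) i :
  (x - y) i = x i - y i.
Proof. by rewrite !ffunE. Qed.

Lemma ffunZr (R : nzRingType) (I : finType) (a : R) (x : {ffun I -> R^o}) i :
  (a *: x) i = a * x i.
Proof. by rewrite ffunE. Qed.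

Section DeleteInsert.
Variable T : finType.
Implicit Types (s : seq T) (u x : T).

Lemma delete0 x s : delete 0 (x :: s) = s.
Proof. by rewrite /delete /= drop0. Qed.

Lemma deleteS i x s : delete i.+1 (x :: s) = x :: delete i s.
Proof. by []. Qed.

Lemma insertS i u x s : insert i.+1 u (x :: s) = x :: insert i u s.
Proof. by []. Qed.

Lemma size_delete i s : (i < size s)%N -> size (delete i s) = (size s).-1.
Proof.
by move=> lt_is; rewrite /delete size_cat size_take size_drop lt_is; lia.
Qed.

Lemma delete_subseq i s : subseq (delete i s) s.
Proof.
elim: s i => [|x s IHs] [|i] //; first by rewrite delete0 subseq_cons.
by rewrite deleteS /= eqxx IHs.
Qed.

Lemma mem_delete x0 i s x : uniq s -> (i < size s)%N ->
  (x \in delete i s) = (x \in s) && (x != nth x0 s i).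
Proof.
elim: s i => [|y s IHs] [|i] // /andP[y_notin_s uniq_s] lt_is.
  rewrite delete0 in_cons /=; case: eqP => [->|_] /=; last by rewrite andbT.
  by rewrite (negbTE y_notin_s).
rewrite deleteS !in_cons IHs //; case: eqP => [->|_] //=.
by apply/esym/negP => /eqP y_nth; rewrite y_nth mem_nth in y_notin_s.
Qed.

Lemma delete_inj s i j : uniq s -> (i < size s)%N -> (j < size s)%N ->
  delete i s = delete j s -> i = j.
Proof.
case: s => [//|x0 s'] uniq_s lt_i lt_j eq_del; apply/eqP/negPn/negP => neq_ij.
have: nth x0 (x0 :: s') j \in delete i (x0 :: s').
  by rewrite (mem_delete x0) // mem_nth //= nth_uniq // eq_sym.
by rewrite eq_del (mem_delete x0) // eqxx andbF.
Qed.

Lemma insert_delete x0 i s : (i < size s)%N -> insert i (nth x0 s i) (delete i s) = s.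
Proof.
elim: s i => [|x s IHs] [|i] //; first by rewrite delete0 /insert take0 drop0.
by move=> lt_is; rewrite deleteS insertS IHs.
Qed.

Lemma subseq_delete s1 s2 : subseq s1 s2 -> size s2 = (size s1).+1 ->
  exists2 i, (i < size s2)%N & s1 = delete i s2.
Proof.
elim: s2 s1 => [|y s2 IHs] [|x s1] //=.
  by move=> _ [/size0nil ->]; exists 0%N; rewrite ?delete0.
case: eqP => [-> | _] sub_s [size_s].
  by have [i lt_i ->] := IHs _ sub_s size_s; exists i.+1.
exists 0%N; rewrite ?delete0 //; have [_] := size_subseq_leqif sub_s.
by rewrite /= size_s eqxx => /esym/eqP.
Qed.

Lemma delete_delete s i j : (j < i)%N ->
  delete j (delete i s) = delete i.-1 (delete j s).
Proof.
elim: s i j => [|x s IHs] [|[|i]] [|j] //= lt_ji.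
- by rewrite deleteS !delete0.
- by rewrite deleteS !delete0.
- by rewrite !deleteS IHs.
Qed.

Lemma sorted_insert_count (e : rel T) i u s : transitive e -> irreflexive e ->
  sorted e (insert i u s) -> (i <= size s)%N -> count (e^~ u) s = i.
Proof.
move=> e_tr e_irr; rewrite /insert (sorted_pairwise e_tr) pairwise_cat allrel_consr.
case/and3P=> /andP[take_lt _] _; rewrite pairwise_cons => /andP[lt_drop _] le_is.
rewrite -[s in count _ s](cat_take_drop i) count_cat.
have /eqP -> : count (e^~ u) (take i s) == size (take i s) by rewrite -all_count.
have /eqP -> : count (e^~ u) (drop i s) == 0%N.
  rewrite -leqn0 leqNgt -has_count; apply/hasP => -[x x_in e_xu].
  by move/allP: lt_drop => /(_ x x_in) e_ux; move: (e_tr _ _ _ e_ux e_xu); rewrite e_irr.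
by rewrite addn0 size_take_min; apply/minn_idPl.
Qed.

(* The simplicial identity [d_j d_i = d_(i-1) d_j] for [j < i] pairs the
   terms off with opposite signs. *)
Lemma sum_delete_delete (R : pzRingType) s q N :
  \sum_(0 <= i < N.+1) \sum_(0 <= j < N)
     ((delete j (delete i s) == q)%:R * (-1) ^+ (i + j) : R) = 0.
Proof.
set G := fun i j => ((delete j (delete i s) == q)%:R * (-1) ^+ (i + j) : R).
have -> : \sum_(0 <= i < N.+1) \sum_(0 <= j < N) G i j =
    \sum_(0 <= i < N.+1) \sum_(0 <= j < N) (if (j < i)%N then G i j else 0) +
    \sum_(0 <= i < N.+1) \sum_(0 <= j < N) (if (i <= j)%N then G i j else 0).
  rewrite -big_split; apply: eq_bigr => i _; rewrite -big_split.
  by apply: eq_bigr => j _ /=; case: ltnP; rewrite ?addr0 ?add0r.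
rewrite big_nat_recl // big_nat_recr //= big1 ?add0r; last by [].
rewrite [X in _ + (_ + X)]big_nat_cond [X in _ + (_ + X)]big1 ?addr0; last first.
  by move=> j /andP[/andP[_ lt_jN] _]; rewrite leqNgt lt_jN.
have -> : \sum_(0 <= i < N) \sum_(0 <= j < N) (if (j < i.+1)%N then G i.+1 j else 0)
   = - \sum_(0 <= i < N) \sum_(0 <= j < N) (if (j <= i)%N then G j i else 0).
  rewrite -sumrN; apply: eq_bigr => i _; rewrite -sumrN; apply: eq_bigr => j _.
  rewrite ltnS; case: leqP => le_ji; last by rewrite oppr0.
  by rewrite /G delete_delete ?ltnS //= addSn exprS mulN1r mulrN addnC.
by rewrite exchange_big /= addNr.
Qed.

End DeleteInsert.

Section ChainComplexes.
Variable R : nzRingType.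

Lemma complex_iso_inverse (C D : nat -> lmodType R)
    (dC : forall n, C n -> C n.-1) (dD : forall n, D n -> D n.-1)
    (phi : forall n, C n -> D n) (psi : forall n, D n -> C n) :
  (forall n, cancel (phi n) (psi n)) -> (forall n, cancel (psi n) (phi n)) ->
  (forall n, linear (psi n)) -> (forall n y, psi n.-1 (dD n y) = dC n (psi n y)) ->
  complex_iso dC dD.
Proof.
move=> phiK psiK psi_lin psi_d; exists phi; split; last split.
- by move=> n a x y; apply: (can_inj (psiK n)); rewrite psi_lin !phiK.
- by move=> n; exists (psi n).
- by move=> n x; apply: (can_inj (psiK n.-1)); rewrite phiK psi_d phiK.
Qed.

Lemma homology_iso_exact_summand (C D1 D2 : nat -> lmodType R)
    (dC : forall n, C n -> C n.-1) (dD1 : forall n, D1 n -> D1 n.-1)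
    (dD2 : forall n, D2 n -> D2 n.-1) :
  complex_iso (D := fun n => (D1 n * D2 n)%type) dC (fun n y => (dD1 n y.1, dD2 n y.2)) ->
  (forall n, dD1 n 0 = 0) -> (forall n, dD2 n 0 = 0) ->
  (forall n (y : D2 n), cycle_ dD2 y -> bdry dD2 y) ->
  forall n, homology_iso dC dD1 n.
Proof.
move=> [phi [phi_lin [phi_bij phi_d]]] dD1_0 dD2_0 D2_exact n.
have phi_inj k := bij_inj (phi_bij k).
have phi_0 k : phi k 0 = 0 by have := phi_lin k (-1) 0 0; rewrite scaler0 addr0 scaleN1r addNr.
have phi_add k x y : phi k (x + y) = phi k x + phi k y.
  by rewrite -[x in LHS]scale1r phi_lin scale1r.
have phi_cycle x : cycle_ dC x -> phi n.-1 (dC n x) = 0 by move->; apply: phi_0.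
exists (fun x => (phi n x).1); split; last split; last split; last split.
- by move=> x /phi_cycle; rewrite phi_d => /(congr1 fst).
- by move=> x y _ _; exists 0; rewrite dD1_0 phi_add subrr.
- by move=> a x _; exists 0; rewrite dD1_0 -[a *: x]addr0 phi_lin phi_0 addr0 subrr.
- move=> x x_cycle; split=> [[y <-]|[z dz]].
    by exists (phi n.+1 y).1; rewrite (phi_d n.+1).
  have [s ds] : bdry dD2 (phi n x).2.
    by apply: D2_exact; have := phi_cycle x x_cycle; rewrite phi_d => /(congr1 snd).
  have [w phi_w] : exists w, phi n.+1 w = (z, s).
    by have [psi _ psiK] := phi_bij n.+1; exists (psi (z, s)); rewrite psiK.
  by exists w; apply: phi_inj; rewrite phi_d phi_w dz ds; case: (phi n x).
- move=> y y_cycle; have [psi _ psiK] := phi_bij n.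
  exists (psi (y, 0)); last by rewrite psiK subrr; exists 0; rewrite dD1_0.
  by apply: phi_inj; rewrite phi_d psiK phi_0 /= y_cycle dD2_0.
Qed.

End ChainComplexes.

Section PathComplex.
Variables (V : finType) (E : rel V).
Hypotheses (E_irr : irreflexive E) (E_tr : transitive E).
Local Notation AP := (APath E).

Lemma allowed_sorted s : allowed E s = (s != [::]) && sorted E s.
Proof. by case: s. Qed.

Lemma size_ps n (a : APath E n) : size (ps a) = n.+1.
Proof. exact: size_tuple. Qed.

Lemma ps_inj n : injective (@ps V E n).
Proof. by move=> a b eq_ab; apply/val_inj/val_inj. Qed.

Lemma sorted_ps n (a : APath E n) : sorted E (ps a).
Proof. by have := valP a; rewrite allowed_sorted => /andP[]. Qed.

Lemma uniq_ps n (a : APath E n) : uniq (ps a).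
Proof. exact: (sorted_uniq E_tr E_irr (sorted_ps a)). Qed.

Lemma allowed_delete s i : (1 < size s)%N -> (i < size s)%N -> allowed E s ->
  allowed E (delete i s).
Proof.
move=> gt1_s lt_is; rewrite !allowed_sorted => /andP[_ sorted_s].
rewrite (subseq_sorted E_tr (delete_subseq i s) sorted_s) andbT -size_eq0.
by rewrite size_delete // -lt0n -ltnS prednK // ltnW.
Qed.

Lemma allowed_delete_ps m (b : APath E m.+1) (i : 'I_m.+2) : allowed E (delete i (ps b)).
Proof. by apply: allowed_delete; rewrite ?size_ps //; apply: (valP b). Qed.

Section Boundary.
Variable R : nzRingType.
Local Notation OM := (Om E R).

Definition delta n (b : AP n) : OM n := [ffun y => (y == b)%:R].

Lemma dOm_succ_is_linear m : linear (@dOm_succ V E R m).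
Proof.
move=> k x z; apply/ffunP => a; rewrite !ffunE scaler_sumr -big_split.
by apply: eq_bigr => b _ /=; rewrite !ffunE mulrDl scalerAl.
Qed.

HB.instance Definition _ m :=
  GRing.isLinear.Build R (OM m.+1) (OM m) _ (@dOm_succ V E R m) (@dOm_succ_is_linear m).

Lemma dOm_succ_delta m (b : AP m.+1) : dOm_succ (delta b) = [ffun a => coef R b a].
Proof.
apply/ffunP => a; rewrite !ffunE -[RHS](sum_kronecker b (fun c => coef R c a)).
by apply: eq_bigr => c _; rewrite ffunE.
Qed.

Lemma sum_kronecker_ps n (s : seq V) (r : R) : size s = n.+1 -> allowed E s ->
  \sum_(y : AP n) (s == ps y)%:R * r = r.
Proof.
move=> /eqP size_s allowed_s; pose y0 : AP n := exist _ (Tuple size_s) allowed_s.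
rewrite -[RHS](sum_kronecker y0); apply: eq_bigr => y _.
suff -> : (s == ps y) = (y == y0) by [].
by apply/eqP/eqP => [ps_y|->] //; apply: ps_inj; rewrite -ps_y.
Qed.

Lemma sum_coef_coef m (b : AP m.+2) (a : AP m) :
  \sum_(y : AP m.+1) coef R b y * coef R y a = 0.
Proof.
set cs := fun s : seq V => \sum_(j < m.+2 | delete j s == ps a) (-1) ^+ j : R.
have coef_coef (y : AP m.+1) : coef R b y * coef R y a =
    \sum_(i < m.+3) (delete i (ps b) == ps y)%:R * ((-1) ^+ i * cs (delete i (ps b))).
  rewrite /coef big_distrl /= big_mkcond; apply: eq_bigr => i _ /=.
  by case: eqP => [<-|_]; rewrite ?mul1r ?mul0r.
under eq_bigr => y _ do rewrite coef_coef.
rewrite exchange_big /= (eq_bigr (fun i : 'I_m.+3 => (-1) ^+ i * cs (delete i (ps b)))).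
  rewrite -[RHS](sum_delete_delete R (ps b) (ps a) m.+2) big_mkord; apply: eq_bigr => i _.
  rewrite big_mkord big_distrr big_mkcond /=; apply: eq_bigr => j _.
  by case: eqP => _; rewrite ?mul1r ?mul0r ?mulr0 // exprD.
move=> i _; apply: sum_kronecker_ps; first by rewrite size_delete ?size_ps.
exact: allowed_delete_ps.
Qed.

Lemma dOm_succK m (x : OM m.+2) : dOm_succ (dOm_succ x) = 0.
Proof.
apply/ffunP => a; rewrite !ffunE.
under eq_bigr => y _ do rewrite ffunE big_distrl.
rewrite exchange_big big1 //= => b _.
by under eq_bigr => y _ do rewrite -mulrA; rewrite -big_distrr /= sum_coef_coef mulr0.
Qed.

End Boundary.

Arguments delta {R n} b.

Section Matching.
Variable f : V -> Real.
Hypothesis f_Morse : MorseFn E f.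
Local Notation MP := (MPair E f).

Lemma fval_delete x0 s i : (i < size s)%N ->
  fval f s = fval f (delete i s) + f (nth x0 s i).
Proof.
move=> lt_is; rewrite -{1}(cat_take_drop i s) (drop_nth x0 lt_is) /fval /delete.
by rewrite !big_cat big_cons /= [f _ + _]addrC addrA.
Qed.

Lemma Mb_delete m (a : APath E m) (b : APath E m.+1) : Mb f a b ->
  exists i : 'I_m.+2, ps a = delete i (ps b) /\ f (tnth (val b) i) = 0.
Proof.
case/andP=> sub_ab /eqP fval_ab.
have [i lt_i ps_a] : exists2 i, (i < size (ps b))%N & ps a = delete i (ps b).
  by apply: subseq_delete sub_ab _; rewrite !size_ps.
rewrite size_ps in lt_i; exists (Ordinal lt_i); split => //.
have x0 := tnth (val b) (Ordinal lt_i).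
have := @fval_delete x0 (ps b) i; rewrite size_ps -ps_a -fval_ab => /(_ lt_i).
by rewrite (tnth_nth x0) -{1}[fval f _]addr0 => /addrI <-.
Qed.

Lemma zero_notin_delete m (b : APath E m.+1) (j : 'I_m.+2) x :
  f (tnth (val b) j) = 0 -> f x = 0 -> x \notin delete j (ps b).
Proof.
move=> fj0 fx0; apply/negP; have x0 := tnth (val b) j.
rewrite (mem_delete x0) ?uniq_ps ?size_ps // => /andP[/tnthP[i x_i]].
rewrite x_i in fx0 *; have allowed_del := allowed_delete_ps b.
rewrite (f_Morse.1 _ _ (valP b) _ _ fx0 (allowed_del i) fj0 (allowed_del j)).
by rewrite (tnth_nth x0) eqxx.
Qed.

Lemma coef_neq0_delete (R : nzRingType) m (b : APath E m.+1) (a : APath E m) :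
  coef R b a != 0 -> exists j : 'I_m.+2, delete j (ps b) = ps a.
Proof.
case: (pickP (fun j : 'I_m.+2 => delete j (ps b) == ps a)) => [j /eqP|none]; first by exists j.
by rewrite /coef big_pred0 ?eqxx.
Qed.

(* Otherwise the zero vertex of [b'] survives in [a], and [b] has two zero
   vertices. *)
Lemma Mb_coef_neq0 (R : nzRingType) m (a a' : APath E m) (b b' : APath E m.+1) :
  Mb f a b -> Mb f a' b' -> coef R b' a != 0 -> a = a'.
Proof.
move=> Mab Mab' /coef_neq0_delete [j del_j].
have [i [ps_a fi0]] := Mb_delete Mab; have [i' [ps_a' fi'0]] := Mb_delete Mab'.
have [eq_ji'|neq_ji'] := eqVneq j i'; first by apply: ps_inj; rewrite -del_j ps_a' eq_ji'.
have x0 := tnth (val b') i'.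
have: tnth (val b') i' \in ps a.
  rewrite -del_j (mem_delete x0) ?uniq_ps ?size_ps // mem_tnth /= (tnth_nth x0).
  by rewrite nth_uniq ?size_ps ?uniq_ps // eq_sym.
by rewrite ps_a (negbTE (zero_notin_delete fi0 fi'0)).
Qed.

Lemma Mb_uniq_up m (a : APath E m) (b b' : APath E m.+1) :
  Mb f a b -> Mb f a b' -> b = b'.
Proof.
have insert_Mb (c : APath E m.+1) : Mb f a c -> exists2 k : 'I_m.+2,
    f (tnth (val c) k) = 0 & ps c = insert k (tnth (val c) k) (ps a).
  case/Mb_delete=> k [ps_a fk0]; exists k => //.
  by rewrite ps_a (tnth_nth (tnth (val c) k)) insert_delete ?size_ps.
have count_insert (c : APath E m.+1) (k : 'I_m.+2) u : ps c = insert k u (ps a) ->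
    count (E^~ u) (ps a) = k.
  move=> ps_c; apply: sorted_insert_count E_tr E_irr _ _.
    by rewrite -ps_c; apply: sorted_ps.
  by rewrite size_ps -ltnS.
move=> /insert_Mb[i fi0 ps_b] /insert_Mb[i' fi'0 ps_b'].
have eq_u : tnth (val b) i = tnth (val b') i'.
  apply: (f_Morse.2 m (val a) (valP a)) => //.
    by exists i; rewrite -ltnS -[insert _ _ _]ps_b; split=> //; apply: (valP b).
  by exists i'; rewrite -ltnS -[insert _ _ _]ps_b'; split=> //; apply: (valP b').
have eq_i : i = i' :> nat.
  by rewrite -(count_insert _ _ _ ps_b) -(count_insert _ _ _ ps_b') eq_u.
by apply: ps_inj; rewrite ps_b ps_b' eq_u eq_i.
Qed.

Lemma Mb_uniq_down m (a a' : APath E m) (b : APath E m.+1) :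
  Mb f a b -> Mb f a' b -> a = a'.
Proof.
case/Mb_delete=> i [ps_a fi0] /Mb_delete[i' [ps_a' fi'0]]; have allowed_del := allowed_delete_ps b.
have eq_i := f_Morse.1 _ _ (valP b) _ _ fi0 (allowed_del i) fi'0 (allowed_del i').
by apply: ps_inj; rewrite ps_a ps_a' eq_i.
Qed.

Lemma Mb_no_chain m (a : APath E m) (b : APath E m.+1) (c : APath E m.+2) :
  Mb f a b -> Mb f b c -> False.
Proof.
move=> Mab Mbc; have [i [_ fi0]] := Mb_delete Mab; have [j [ps_b fj0]] := Mb_delete Mbc.
have : tnth (val b) i \in ps b by apply: mem_tnth.
by rewrite ps_b (negbTE (zero_notin_delete fj0 fi0)).
Qed.

Lemma Mb_coef_unit (R : unitRingType) m (a : APath E m) (b : APath E m.+1) :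
  Mb f a b -> coef R b a \is a GRing.unit.
Proof.
move=> Mab; have [i [ps_a _]] := Mb_delete Mab.
rewrite /coef (big_pred1 i) ?unitrX ?unitrN1 // => k /=; rewrite ps_a.
apply/eqP/eqP => [/(delete_inj (uniq_ps b))|->] //.
by rewrite !size_ps => /(_ (ltn_ord k) (ltn_ord i)) /val_inj.
Qed.

Lemma dCM0 (R : comUnitRingType) n : dCM (0 : CM E f R n) = 0.
Proof.
by case: n => [|n] //; apply/ffunP => a; rewrite !ffunE big1 // => b _; rewrite ffunE mul0r.
Qed.

Lemma dAt0 (R : nzRingType) n : dAt (0 : At E f R n) = 0.
Proof. by case: n => [|n] //; apply/ffunP => -[q|p]; rewrite !ffunE. Qed.

Lemma dAt_exact (R : nzRingType) n (t : At E f R n) :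
  dAt t = 0 -> exists s : At E f R n.+1, dAt s = t.
Proof.
move=> dt0; exists [ffun j => if j is inl p then t (inr p) else 0].
apply/ffunP => -[q|p]; rewrite !ffunE //.
case: n t q dt0 => [|m] t q dt0; first by case: q.
by have := congr1 (fun u : At E f R m => u (inr q)) dt0; rewrite !ffunE.
Qed.

Section Decomposition.
Variable R : comUnitRingType.
Local Notation OM := (Om E R).
Local Notation pair_coef p := (coef R (val p).2 (val p).1).

Lemma pair_coef_unit m (p : MP m) : pair_coef p \is a GRing.unit.
Proof. by have := Mb_coef_unit R (valP p). Qed.

Lemma MPair_snd_inj m : injective (fun p : MP m => (val p).2).
Proof.
move=> p q /= eq2; have eq1 : (val p).1 = (val q).1.
  by apply: (Mb_uniq_down (valP p)); rewrite eq2; apply: (valP q).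
exact/val_inj/injective_projections.
Qed.

Lemma coef_MPair_eq0 m (p p' : MP m) : p' != p -> coef R (val p').2 (val p).1 = 0.
Proof.
apply: contraNeq => nz_coef; apply/eqP/MPair_snd_inj => /=; symmetry.
apply: (Mb_uniq_up (valP p)); rewrite (Mb_coef_neq0 (valP p) (valP p') nz_coef).
exact: (valP p').
Qed.

Definition top_path n : topT E f n -> AP n :=
  match n with 0 => fun v => match v with end | m.+1 => fun q : MP m => (val q).2 end.

Lemma top_path_inj n : injective (@top_path n).
Proof. by case: n => [[]|m]; apply: MPair_snd_inj. Qed.

Lemma matched_downP n (y : AP n) :
  reflect (exists q, top_path q = y) (matched_down f y).
Proof.
case: n y => [|m] y /=; first by right; case.
apply: (iffP existsP) => [[a May]|[q <-]]; first by exists (exist _ (a, y) May).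
by exists (val q).1; apply: (valP q).
Qed.

Lemma not_matched_down_fst n (p : MP n) : ~~ matched_down f (val p).1.
Proof. by case: n p => [//|m] p; apply/existsP => -[a Ma]; apply: Mb_no_chain Ma (valP p). Qed.

Lemma not_matched_down_crit n (c : Crit E f n) : ~~ matched_down f (val c).
Proof. by case/andP: (valP c). Qed.

Lemma crit_neq_fst n (c : Crit E f n) (p : MP n) : val c != (val p).1.
Proof.
apply: contraTneq (valP c) => ->; rewrite /critb negb_and !negbK; apply/orP; right.
by apply/existsP; exists (val p).2; apply: (valP p).
Qed.

Lemma not_matched_downP n (y : AP n) : ~~ matched_down f y ->
  (exists p : MP n, (val p).1 = y) \/ exists c : Crit E f n, val c = y.
Proof.
move=> nd_y; have [/existsP[b Myb]|nu_y] := boolP [exists b, Mb f y b].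
  by left; exists (exist _ (y, b) Myb).
have crit_y : critb f y by rewrite /critb nd_y nu_y.
by right; exists (exist _ y crit_y).
Qed.

Definition crit_corr m (c : AP m.+1) (p : MP m) : R := coef R c (val p).1 / pair_coef p.

Definition crit_chain n : AP n -> OM n :=
  match n with
  | 0 => fun c => delta c
  | m.+1 => fun c => delta c - \sum_(p : MP m) crit_corr c p *: delta (val p).2
  end.

Lemma crit_chain_not_matched_down n (c : AP n) y : ~~ matched_down f y ->
  crit_chain c y = (y == c)%:R.
Proof.
case: n c y => [|m] c y nd_y /=; rewrite !ffunE // sum_ffunE big1 ?subr0 // => p _.
rewrite ffunZr ffunE; case: eqP => [y_snd|_]; last by rewrite mulr0.
by case/negP: nd_y; apply/existsP; exists (val p).1; rewrite y_snd; apply: (valP p).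
Qed.

Lemma crit_comb_crit n (t : Crit E f n -> R) (c : Crit E f n) :
  (\sum_(a : Crit E f n) t a *: crit_chain (val a)) (val c) = t c.
Proof.
rewrite sum_ffunE -[RHS](sum_kronecker c); apply: eq_bigr => a _.
rewrite ffunZr crit_chain_not_matched_down ?not_matched_down_crit // mulrC.
by rewrite (inj_eq val_inj) eq_sym.
Qed.

Lemma crit_comb_fst n (t : Crit E f n -> R) (p : MP n) :
  (\sum_(a : Crit E f n) t a *: crit_chain (val a)) (val p).1 = 0.
Proof.
rewrite sum_ffunE big1 // => a _.
rewrite ffunZr crit_chain_not_matched_down ?not_matched_down_fst //.
by rewrite eq_sym (negbTE (crit_neq_fst a p)) mulr0.
Qed.

Lemma dOm_crit_chainE m (c : AP m.+1) y :
  dOm_succ (crit_chain c) y = coef R c y - \sum_(p : MP m) crit_corr c p * coef R (val p).2 y.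
Proof.
rewrite /= linearB linear_sum /= dOm_succ_delta.
under eq_bigr => p _ do rewrite linearZ /= dOm_succ_delta.
by rewrite !ffunE sum_ffunE; congr (_ - _); apply: eq_bigr => p _; rewrite ffunZr ffunE.
Qed.

Lemma dOm_crit_chain_fst m (c : AP m.+1) (p : MP m) : dOm_succ (crit_chain c) (val p).1 = 0.
Proof.
rewrite dOm_crit_chainE (bigD1 p) //= big1 ?addr0 => [|p' neq_p']; last first.
  by rewrite coef_MPair_eq0 ?mulr0.
by rewrite mulrVK ?subrr ?pair_coef_unit.
Qed.

Lemma alt_ok_size m (a : AP m) (c : AP m.+1) pa (t : seq (AP m * AP m.+1)) :
  alt_ok f R a c pa t -> (size t <= 1)%N.
Proof.
case: t => [|[a1 b1] [|[a2 b2] t]] //= /and4P[_ _ Mab1 /and4P[nz_coef neq_a Mab2 _]].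
by rewrite (Mb_coef_neq0 Mab2 Mab1 nz_coef) eqxx in neq_a.
Qed.

(* Alternating paths have length at most one, and those of length one are
   exactly the correction terms of [crit_chain]. *)
Lemma morse_coefE m (c : AP m.+1) (a : AP m) : critb f a ->
  morse_coef f R c a = dOm_succ (crit_chain c) a.
Proof.
move=> crit_a; rewrite dOm_crit_chainE /morse_coef.
have [N card_N] : exists N, #|{: AP m.+1}| = N.+1.
  by exists #|{: AP m.+1}|.-1; rewrite prednK //; apply/card_gt0P; exists c.
rewrite card_N !big_ord_recl [X in _ + (_ + X)]big1 ?addr0 => [|k _]; last first.
  rewrite big_pred0 // => t; apply/negbTE/nandP; right; apply/negP => /alt_ok_size.
  by rewrite size_tuple.
rewrite big_mkcond sum_tuple0 /= andbT; congr (_ + _); first by case: eqP => [->|].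
rewrite big_mkcond sum_tuple1 -sumrN.
rewrite -(sum_sig (fun z : AP m * AP m.+1 => Mb f z.1 z.2)
           (fun z => - (coef R c z.1 / coef R z.2 z.1 * coef R z.2 a))).
rewrite [RHS]big_mkcond; apply: eq_bigr => -[a1 b1] _ /=.
case Mab1: (Mb f a1 b1); rewrite ?andbF //=.
have -> : Some a != Some a1.
  apply: contraTneq crit_a => -[->]; rewrite /critb negb_and !negbK.
  by apply/orP; right; apply/existsP; exists b1.
rewrite andbT mulNr; case: eqP => [->|_]; first by rewrite !mul0r oppr0.
by case: eqP => [->|_]; rewrite ?mulr0 ?oppr0.
Qed.

Lemma top_expansion n (w : OM n) : (forall y, ~~ matched_down f y -> w y = 0) ->
  w = \sum_(q : topT E f n) w (top_path q) *: delta (top_path q).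
Proof.
move=> w_eq0; apply/ffunP => y; rewrite sum_ffunE.
have [/matched_downP[q <-]|nd_y] := boolP (matched_down f y).
  rewrite -[LHS](sum_kronecker q (fun q => w (top_path q))); apply: eq_bigr => q' _.
  by rewrite ffunZr ffunE (inj_eq (@top_path_inj n)) mulrC eq_sym.
rewrite w_eq0 // big1 // => q _; rewrite ffunZr ffunE.
case: eqP => [y_top|_]; last by rewrite mulr0.
by case/negP: nd_y; apply/matched_downP; exists q.
Qed.

Lemma top_comb_not_matched_down n (t : topT E f n -> R) y : ~~ matched_down f y ->
  (\sum_(q : topT E f n) t q *: delta (top_path q)) y = 0.
Proof.
move=> nd_y; rewrite sum_ffunE big1 // => q _; rewrite ffunZr ffunE.
case: eqP => [y_top|_]; last by rewrite mulr0.
by case/negP: nd_y; apply/matched_downP; exists q.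
Qed.

(* The incidences [<d b_q, a_q'>] between matched pairs form a diagonal matrix
   with unit entries. *)
Lemma matched_support_eq0 m (w : OM m.+1) : (forall y, ~~ matched_down f y -> w y = 0) ->
  (forall q : MP m, dOm_succ w (val q).1 = 0) -> w = 0.
Proof.
move=> w_eq0 dw_eq0; rewrite (top_expansion w_eq0) big1 // => q _.
have := dw_eq0 q; rewrite {1}(top_expansion w_eq0) linear_sum sum_ffunE (bigD1 q) //=.
rewrite big1 ?addr0 => [|q' neq_q']; last first.
  by rewrite linearZ ffunZr /= dOm_succ_delta ffunE coef_MPair_eq0 ?mulr0.
rewrite linearZ ffunZr /= dOm_succ_delta ffunE => /(congr1 (fun r => r / pair_coef q)).
by rewrite mulrK ?pair_coef_unit // mul0r => ->; rewrite scale0r.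
Qed.

Lemma dOm_crit_chain m (c : AP m.+1) :
  dOm_succ (crit_chain c) =
  \sum_(a : Crit E f m) morse_coef f R c (val a) *: crit_chain (val a).
Proof.
apply/eqP; rewrite -subr_eq0; apply/eqP.
have w_eq0 y : ~~ matched_down f y -> (dOm_succ (crit_chain c) -
    \sum_(a : Crit E f m) morse_coef f R c (val a) *: crit_chain (val a)) y = 0.
  case/not_matched_downP => [[p <-]|[a <-]]; rewrite ffunB.
    by rewrite dOm_crit_chain_fst crit_comb_fst subrr.
  by rewrite crit_comb_crit morse_coefE ?subrr //; apply: (valP a).
case: m c w_eq0 => [|m] c w_eq0; first by apply/ffunP => y; rewrite w_eq0 ?ffunE.
apply: matched_support_eq0 w_eq0 _ => q.
rewrite linearB linear_sum /= dOm_succK ffunB ffunE sum_ffunE big1 ?subr0 // => a _.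
by rewrite linearZ ffunZr /= dOm_crit_chain_fst mulr0.
Qed.

Definition atom_chain n (j : topT E f n + MP n) : OM n :=
  match j with inl q => delta (top_path q) | inr p => dOm_succ (delta (val p).2) end.

Lemma atom_bot_fst n (t : MP n -> R) (p : MP n) :
  (\sum_(p' : MP n) t p' *: atom_chain (inr p')) (val p).1 = t p * pair_coef p.
Proof.
rewrite sum_ffunE (bigD1 p) //= big1 ?addr0 => [|p' neq_p']; last first.
  by rewrite ffunZr dOm_succ_delta ffunE coef_MPair_eq0 ?mulr0.
by rewrite ffunZr dOm_succ_delta ffunE.
Qed.

Lemma dOm_atoms m (t : {ffun (topT E f m.+1 + MP m.+1) -> R^o}) :
  dOm_succ (\sum_j t j *: atom_chain j) = \sum_j dAt_succ t j *: atom_chain j.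
Proof.
rewrite linear_sum !sum_sumType /= [X in _ = X + _]big1 => [|q _]; last first.
  by rewrite ffunE scale0r.
rewrite [X in _ + X = _]big1 ?addr0 => [|p _]; last first.
  by rewrite linearZ /= dOm_succK scaler0.
by rewrite add0r; apply: eq_bigr => q _; rewrite ffunE linearZ.
Qed.

Definition from_sum n (y : SumC E f R n) : OM n :=
  \sum_(c : Crit E f n) y.1 c *: crit_chain (val c) + \sum_j y.2 j *: atom_chain j.

Lemma from_sum_is_linear n : linear (@from_sum n).
Proof.
move=> k y z; rewrite /from_sum scalerDr addrACA !scaler_sumr -!big_split /=.
by congr (_ + _); apply: eq_bigr => i _; rewrite ffunE ffunZr scalerDl scalerA.
Qed.

Lemma from_sum_d n (y : SumC E f R n) : from_sum (dSum y) = dOm (from_sum y).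
Proof.
case: n y => [|m] y.
  by rewrite /from_sum /= !big1 ?addr0 // => i _; rewrite ffunE scale0r.
rewrite /from_sum /= linearD linear_sum /= dOm_atoms; congr (_ + _).
under [RHS]eq_bigr => c _ do rewrite linearZ /= dOm_crit_chain scaler_sumr.
rewrite exchange_big; apply: eq_bigr => a _; rewrite ffunE scaler_suml.
by apply: eq_bigr => c _; rewrite scalerA.
Qed.

(* Coordinates in the basis [crit_chain c], [delta b], [dOm_succ (delta b)]:
   the last ones are read off at the lower ends of matched pairs, the critical
   ones after removing them, and the remainder is supported on upper ends. *)
Definition bot_coord n (x : OM n) (p : MP n) : R := x (val p).1 / pair_coef p.

Definition strip_bot n (x : OM n) : OM n :=
  x - \sum_(p : MP n) bot_coord x p *: atom_chain (inr p).

Definition strip_crit n (x : OM n) : OM n :=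
  strip_bot x - \sum_(c : Crit E f n) strip_bot x (val c) *: crit_chain (val c).

Definition to_sum n (x : OM n) : SumC E f R n :=
  ([ffun c => strip_bot x (val c)],
   [ffun j => match j with inl q => strip_crit x (top_path q) | inr p => bot_coord x p end]).

Arguments to_sum : simpl never.

Lemma to_sum_crit n (x : OM n) c : (to_sum x).1 c = strip_bot x (val c).
Proof. by rewrite ffunE. Qed.

Lemma to_sum_top n (x : OM n) q : (to_sum x).2 (inl q) = strip_crit x (top_path q).
Proof. by rewrite ffunE. Qed.

Lemma to_sum_bot n (x : OM n) p : (to_sum x).2 (inr p) = bot_coord x p.
Proof. by rewrite ffunE. Qed.

Lemma strip_crit_not_matched_down n (x : OM n) y :
  ~~ matched_down f y -> strip_crit x y = 0.
Proof.
case/not_matched_downP => [[p <-]|[c <-]]; rewrite ffunB ?crit_comb_crit ?subrr //.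
by rewrite crit_comb_fst ffunB atom_bot_fst mulrVK ?pair_coef_unit ?subrr.
Qed.

Lemma to_sumK n : cancel (@to_sum n) (@from_sum n).
Proof.
move=> x; rewrite /from_sum sum_sumType /=.
under [X in X + _ = _]eq_bigr => c _ do rewrite to_sum_crit.
under [X in _ + (X + _) = _]eq_bigr => q _ do rewrite to_sum_top.
under [X in _ + (_ + X) = _]eq_bigr => p _ do rewrite to_sum_bot.
rewrite -(top_expansion (strip_crit_not_matched_down x)) /strip_crit /strip_bot.
by rewrite addrA [X in X + _]addrC !subrK.
Qed.

Lemma from_sumK n : cancel (@from_sum n) (@to_sum n).
Proof.
move=> y; set z := from_sum y.
have bot_z p : bot_coord z p = y.2 (inr p).
  rewrite /bot_coord /z /from_sum sum_sumType ffunD crit_comb_fst add0r ffunD.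
  rewrite top_comb_not_matched_down ?not_matched_down_fst // add0r atom_bot_fst.
  by rewrite mulrK ?pair_coef_unit.
have strip_bot_z : strip_bot z = \sum_(c : Crit E f n) y.1 c *: crit_chain (val c) +
    \sum_(q : topT E f n) y.2 (inl q) *: delta (top_path q).
  rewrite /strip_bot; under eq_bigr => p _ do rewrite bot_z.
  by rewrite /z /from_sum sum_sumType addrA addrK.
have crit_z c : strip_bot z (val c) = y.1 c.
  rewrite strip_bot_z ffunD crit_comb_crit top_comb_not_matched_down ?addr0 //.
  exact: not_matched_down_crit.
have strip_crit_z : strip_crit z = \sum_(q : topT E f n) y.2 (inl q) *: delta (top_path q).
  rewrite /strip_crit; under eq_bigr => c _ do rewrite crit_z.
  by rewrite strip_bot_z addrC addKr.
apply: injective_projections; apply/ffunP; [move=> c | case=> [q|p]];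
  rewrite ?to_sum_crit ?to_sum_top ?to_sum_bot //.
rewrite strip_crit_z sum_ffunE -[RHS](sum_kronecker q (fun q => y.2 (inl q))).
by apply: eq_bigr => q' _; rewrite ffunZr ffunE (inj_eq (@top_path_inj n)) mulrC eq_sym.
Qed.

Lemma morse_decomposition :
  complex_iso (C := OmC E R) (D := SumC E f R) (@dOm V E R) (@dSum V E f R).
Proof. exact: complex_iso_inverse to_sumK from_sumK from_sum_is_linear from_sum_d. Qed.

End Decomposition.

End Matching.

End PathComplex.

Theorem theorem1p1 (R : comUnitRingType) (V : finType) (E : rel V)
    (f : V -> Real) :
  irreflexive E -> transitive E ->
  (forall v, 0 <= f v) -> MorseFn E f ->
  complex_iso (C:=OmC E R) (D:=SumC E f R) (@dOm V E R) (@dSum V E f R) /\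
  (forall n : nat,
     homology_iso (C:=OmC E R) (D:=CMC E f R) (@dOm V E R) (@dCM V E f R) n).
Proof.
move=> E_irr E_tr _ f_Morse; have iso := morse_decomposition E_irr E_tr f_Morse R.
split=> //; apply: (homology_iso_exact_summand
  (D2 := fun n => ({ffun (topT E f n + MPair E f n)%type -> R^o} : lmodType R)) iso).
- exact: dCM0.
- by move=> n; apply: dAt0.
- by move=> n t; apply: dAt_exact.
Qed.
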